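(* Under exactly the hypotheses of the preceding theorem (constants $c\in(0,1)$, $C\ge1$ with $|K^{(n)}_w(i)|\le C\binom nw(1-\frac{2w}{n})^i$ for all $n\ge1$, $0\le w\le cn$, $0\le i\le n/2$; a binary linear $[n,k]$ code $\mathcal{C}$ with $1\le k\le n-1$, generator matrix $G$ of rank $k$, dual distance $d^\perp$, $t^\perp=\lfloor (d^\perp-1)/2\rfloor$; an integer $0\le w\le cn$; $\varepsilon>0$; and a random vector $Z$ on $\mathbb{F}_2^n$ with $d_{TV}(P_{GZ},P_{U_k})\le\varepsilon$), the average absolute bias over all vectors of weight $w$ satisfies $$\frac{1}{\binom nw}\sum_{e\in\mathbb{F}_2^n:|e|=w}|\mathrm{bias}(e^\intercal Z)|\le\sqrt{\frac{|\mathcal{C}^\perp|V_n(t^\perp)}{2^{n+1}}}+\frac{\sqrt{Cn}}{2}\left(1-\frac{2w}{n}\right)^{t^\perp/2}+\sqrt{\frac\varepsilon2}.$$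
   Context: Krawtchouk polynomial: $K^{(n)}_w(i)=\sum_{j=0}^w(-1)^j\binom ij\binom{n-i}{w-j}$. Dual distance $d^\perp$: minimum Hamming weight of a nonzero vector of $\mathcal{C}^\perp$. $V_n(t)=\sum_{j=0}^t\binom nj$. For a $\{0,1\}$-valued random variable $\xi$, $\mathrm{bias}(\xi)=\frac12-\Pr(\xi=1)$. $P_{U_k}$ is uniform on $\mathbb{F}_2^k$; $d_{TV}(P,Q)=\frac12\sum_x|P(x)-Q(x)|$. *)

From HB Require Import structures.
From mathcomp Require Import all_boot all_order all_algebra all_field.
From mathcomp Require Import reals exp.
Set Implicit Arguments. Unset Strict Implicit. Unset Printing Implicit Defensive.
Import Order.TTheory GRing.Theory Num.Theory.
Local Open Scope ring_scope.

Definition kraw (R : ringType) (n w i : nat) : R :=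
  \sum_(j < w.+1) (-1) ^+ j * ('C(i, j))%:R * ('C(n - i, w - j))%:R.

Definition wt (n : nat) (x : 'cV['F_2]_n) : nat := #|[set i | x i 0 != 0]|.

Definition dual_code (k n : nat) (G : 'M['F_2]_(k, n)) : {set 'cV['F_2]_n} :=
  [set y | G *m y == 0].

(* dual distance: minimum weight of a nonzero dual codeword (default n if none) *)
Definition dual_dist (k n : nat) (G : 'M['F_2]_(k, n)) : nat :=
  \big[minn/n]_(y in dual_code G | y != 0) wt y.

Definition Vball (n t : nat) : nat := \sum_(j < t.+1) 'C(n, j).

Definition is_distr (R : numDomainType) (n : nat) (P : 'cV['F_2]_n -> R) : Prop :=
  (forall z, 0 <= P z) /\ \sum_z P z = 1.

Definition pushGZ (R : ringType) (k n : nat) (G : 'M['F_2]_(k, n))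
  (P : 'cV['F_2]_n -> R) (y : 'cV['F_2]_k) : R :=
  \sum_(z | G *m z == y) P z.

Definition dTV_unif (R : numFieldType) (k : nat) (Q : 'cV['F_2]_k -> R) : R :=
  2^-1 * \sum_y `|Q y - (2 ^+ k)^-1|.

Definition bias (R : numFieldType) (n : nat) (P : 'cV['F_2]_n -> R) (e : 'cV['F_2]_n) : R :=
  2^-1 - \sum_(z | (e^T *m z) 0 0 == 1) P z.

From HB Require Import structures.
From mathcomp Require Import all_boot all_order all_algebra all_field.
From mathcomp Require Import reals exp.
From mathcomp Require Import zify ring lra.
Import Order.TTheory GRing.Theory Num.Theory.
Set Implicit Arguments. Unset Strict Implicit. Unset Printing Implicit Defensive.
Local Open Scope ring_scope.

(* Write bias(e.Z) = f(e)/2 with f(e) = E (-1)^(e.Z).  For an independent copy Z'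
   of Z, the sum of f(e)^2 over |e| = w is E K_w(|Z + Z'|).  Where Z + Z' lies within
   t of 0 or of the all-ones word only |K_w| <= C(n, w) is available, but these events
   are rare: G is injective on Hamming balls of radius t (two points of a ball differ
   by a dual codeword of weight < d), so such a ball carries at most its share
   |C^perp| V_n(t) / 2^n of the nearly uniform law of GZ, plus eps.  Everywhere else
   the Krawtchouk hypothesis, together with the reflection K_w(i) = (-1)^w K_w(n - i),
   gives |K_w| <= C C(n, w) (1 - 2w/n)^t.  Cauchy-Schwarz turns this bound on the
   second moment of f into the bound on its mean absolute value. *)

Lemma F2_cases (a : 'F_2) : a = 0 \/ a = 1.
Proof. case: a => [[|[|m]] Hm]; [left|right|by []]; exact/val_inj. Qed.

Lemma F2_nat m : (m%:R : 'F_2) = (odd m)%:R.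
Proof. by rewrite -modn2 Fp_nat_mod. Qed.

Lemma F2_neq0 (a : 'F_2) : a = (a != 0)%:R.
Proof. by case: (F2_cases a) => ->. Qed.

Lemma addxx_F2 m p (x : 'M['F_2]_(m, p)) : x + x = 0.
Proof.
by apply/matrixP => i j; rewrite !mxE; case: (F2_cases (x i j)) => ->; rewrite ?addr0 //; apply/eqP.
Qed.

Definition supp n (x : 'cV['F_2]_n) : {set 'I_n} := [set i | x i 0 != 0].

Definition vec_of_set n (A : {set 'I_n}) : 'cV['F_2]_n := \col_i (i \in A)%:R.

Lemma supp_vec_of_set n (A : {set 'I_n}) : supp (vec_of_set A) = A.
Proof. by apply/setP => i; rewrite inE mxE; case: (i \in A); rewrite ?oner_eq0 ?eqxx. Qed.

Lemma vec_of_setK n : cancel (@supp n) (@vec_of_set n).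
Proof. by move=> e; apply/matrixP => i j; rewrite ord1 mxE inE -F2_neq0. Qed.

Lemma dotmx_F2 n (e x : 'cV['F_2]_n) : (e^T *m x) 0 0 = #|supp e :&: supp x|%:R.
Proof.
rewrite mxE -sum1_card natr_sum [RHS]big_mkcond /=; apply: eq_bigr => j _.
by rewrite mxE !inE {1}(F2_neq0 (e j 0)) {1}(F2_neq0 (x j 0)) -natrM mulnb; case: andb.
Qed.

Lemma wt_le n (x : 'cV['F_2]_n) : (wt x <= n)%N.
Proof. by rewrite -[X in (_ <= X)%N]card_ord max_card. Qed.

Lemma wt_eq0 n (x : 'cV['F_2]_n) : (wt x == 0%N) = (x == 0).
Proof.
apply/idP/eqP => [|->]; last first.
  by rewrite cards_eq0; apply/eqP/setP => i; rewrite !inE mxE eqxx.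
rewrite cards_eq0 => /eqP x0; apply/matrixP => i j; rewrite ord1 mxE.
by apply/eqP; rewrite -[_ == 0]negbK -(in_set (fun i => x i 0 != 0)) x0 inE.
Qed.

Lemma wt_add n (a b : 'cV['F_2]_n) : (wt (a + b) <= wt a + wt b)%N.
Proof.
rewrite /wt -!/(supp _).
apply: leq_trans (leq_card_setU (supp a) (supp b)); apply: subset_leq_card.
apply/subsetP => i; rewrite !inE mxE.
by case: (F2_cases (a i 0)) => ->; case: (F2_cases (b i 0)) => ->.
Qed.

Lemma wt_add_const1 n (x : 'cV['F_2]_n) : wt (x + const_mx 1) = (n - wt x)%N.
Proof.
rewrite /wt -!/(supp _).
have -> : supp (x + const_mx 1) = ~: supp x.
  apply/setP => i; rewrite !inE !mxE.
  by case: (F2_cases (x i 0)) => ->; rewrite ?add0r ?oner_eq0 ?eqxx //; apply/eqP.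
by rewrite cardsCs setCK card_ord.
Qed.

Lemma card_wt n w : #|[set e : 'cV['F_2]_n | wt e == w]| = 'C(n, w).
Proof.
have -> : [set e : 'cV['F_2]_n | wt e == w] = @vec_of_set n @: [set A : {set 'I_n} | #|A| == w].
  apply/setP => e; rewrite inE; apply/idP/imsetP => [we|[A]].
    by exists (supp e); rewrite ?inE ?vec_of_setK.
  by rewrite inE => /eqP <- ->; rewrite /wt -/(supp _) supp_vec_of_set.
by rewrite card_imset ?card_draws ?card_ord //; exact: (can_inj (@supp_vec_of_set n)).
Qed.

Lemma sum_wt_const (V : nmodType) n w (x : V) :
  \sum_(e : 'cV['F_2]_n | wt e == w) x = x *+ 'C(n, w).
Proof. by rewrite -card_wt -sumr_const; apply: eq_bigl => e; rewrite inE. Qed.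

Definition chi (R : comNzRingType) n (e x : 'cV['F_2]_n) : R :=
  if (e^T *m x) 0 0 == 1 then -1 else 1.

Lemma chiE (R : comNzRingType) n (e x : 'cV['F_2]_n) :
  chi R e x = (-1) ^+ #|supp e :&: supp x|.
Proof.
by rewrite /chi dotmx_F2 F2_nat -signr_odd; case: odd; rewrite ?expr1 ?expr0.
Qed.

Lemma chiDr (R : comNzRingType) n (e x y : 'cV['F_2]_n) :
  chi R e (x + y) = chi R e x * chi R e y.
Proof.
rewrite /chi mulmxDr mxE.
case: (F2_cases ((e^T *m x) 0 0)) => ->; case: (F2_cases ((e^T *m y) 0 0)) => -> //=;
  by rewrite ?mulrNN ?mulr1 ?mul1r.
Qed.

Lemma normr_chi (R : realDomainType) n (e x : 'cV['F_2]_n) : `|chi R e x| = 1.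
Proof. by rewrite /chi; case: ifP; rewrite ?normrN normr1. Qed.

Lemma chi_const1 (R : comNzRingType) n (e : 'cV['F_2]_n) :
  chi R e (const_mx 1) = (-1) ^+ wt e.
Proof.
rewrite chiE; have -> // : supp e :&: supp (const_mx 1) = supp e.
by apply/setP => i; rewrite !inE mxE oner_eq0 andbT.
Qed.

Section Draws.
Variable T : finType.

Lemma setIU_setD (X B B' : {set T}) : B \subset X -> B' \subset ~: X ->
  (B :|: B') :&: X = B /\ (B :|: B') :\: X = B'.
Proof.
move=> sB sB'; have dB' : [disjoint B' & X] by rewrite -[X]setCK -subsets_disjoint.
split; first by rewrite setIUl (setIidPl sB) (disjoint_setI0 dB') setU0.
by rewrite setDUl (setDidPl dB') (eqP (_ : B :\: X == set0)) ?set0U ?setD_eq0.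
Qed.

(* A w-set meeting X in j points is a j-subset of X plus a (w-j)-subset of ~: X. *)
Lemma card_draws_meet (X : {set T}) w j : (j <= w)%N ->
  #|[set A : {set T} | (#|A| == w) && (#|A :&: X| == j)]|
  = ('C(#|X|, j) * 'C(#|T| - #|X|, w - j))%N.
Proof.
move=> jw.
set D1 := [set B : {set T} | B \subset X & #|B| == j].
set D2 := [set B : {set T} | B \subset ~: X & #|B| == (w - j)%N].
have -> : [set A : {set T} | (#|A| == w) && (#|A :&: X| == j)]
    = (fun p => p.1 :|: p.2) @: setX D1 D2.
  apply/setP => A; rewrite inE; apply/idP/imsetP.
  - move/andP=> [/eqP hA /eqP hX]; exists (A :&: X, A :\: X); last by rewrite setID.
    by rewrite inE /= !inE subsetIr hX eqxx /= setDE subsetIr /= -setDE cardsD hA hX.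
  - move=> [[B B']]; rewrite inE /= !inE.
    move=> /andP[/andP[sB /eqP cB] /andP[sB' /eqP cB']] -> /=.
    have [hI hD] := setIU_setD sB sB'.
    by rewrite hI cB eqxx andbT -(cardsID X (B :|: B')) hI hD cB cB' subnKC.
rewrite card_in_imset; last first.
  move=> [B1 B1'] [B2 B2']; rewrite !inE /=.
  move=> /and3P[/andP[s1 _] s1' _] /and3P[/andP[s2 _] s2' _] /= E.
  have [a1 b1] := setIU_setD s1 s1'; have [a2 b2] := setIU_setD s2 s2'.
  by congr pair; [rewrite -a1 E a2 | rewrite -b1 E b2].
by rewrite cardsX !cards_draws -(cardsC X) addKn.
Qed.

Lemma sum_sign_meet (R : comNzRingType) w (X : {set T}) :
  \sum_(A : {set T} | #|A| == w) (-1) ^+ #|A :&: X| = kraw R #|T| w #|X|.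
Proof.
rewrite (partition_big (fun A : {set T} => (inord #|A :&: X| : 'I_w.+1)) xpredT) //=.
apply: eq_bigr => j _; have jw : (j <= w)%N by rewrite -ltnS ltn_ord.
have meet_le (A : {set T}) : #|A| == w -> (#|A :&: X| <= w)%N.
  by move=> /eqP <-; rewrite subset_leq_card // subsetIl.
rewrite (eq_bigr (fun _ => (-1) ^+ j)) => [|A /andP[/meet_le le /eqP <-]]; last first.
  by rewrite inordK.
rewrite sumr_const -mulrA -natrM -(card_draws_meet X jw) mulr_natr; congr (_ *+ _).
apply: eq_card => A; rewrite !inE unfold_in /=.
case hA: (#|A| == w) => //=; have le := meet_le A hA.
by apply/eqP/eqP => [<-|E]; [rewrite inordK | apply/val_inj; rewrite /= inordK].
Qed.

End Draws.

Lemma sum_chi_wt (R : comNzRingType) n w (x : 'cV['F_2]_n) :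
  \sum_(e : 'cV['F_2]_n | wt e == w) chi R e x = kraw R n w (wt x).
Proof.
rewrite -[n in kraw _ n]card_ord -sum_sign_meet (reindex (@supp n)) /=.
  by apply: eq_bigr => e _; rewrite chiE.
by apply: onW_bij; exists (@vec_of_set n); [exact: vec_of_setK | exact: supp_vec_of_set].
Qed.

(* Adding the all-ones word flips e.x exactly when |e| is odd, whence the reflection
   K_w(i) = (-1)^w K_w(n - i). *)
Lemma sum_chi_wt_compl (R : comNzRingType) n w (x : 'cV['F_2]_n) :
  \sum_(e : 'cV['F_2]_n | wt e == w) chi R e x = (-1) ^+ w * kraw R n w (n - wt x).
Proof.
rewrite -wt_add_const1 -sum_chi_wt mulr_sumr; apply: eq_bigr => e /eqP we.
by rewrite chiDr chi_const1 we mulrCA -exprMn mulrNN mulr1 expr1n mulr1.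
Qed.

Definition kraw_bounded (R : realFieldType) (c C : R) : Prop :=
  forall (n' w' i : nat), (1 <= n')%N -> w'%:R <= c * n'%:R -> (2 * i <= n')%N ->
    `|kraw R n' w' i| <= C * ('C(n', w'))%:R * (1 - 2 * w'%:R / n'%:R) ^+ i.

Definition fourier (R : comNzRingType) n (P : 'cV['F_2]_n -> R) (e : 'cV['F_2]_n) : R :=
  \sum_z P z * chi R e z.

Definition hamming_ball n (c0 : 'cV['F_2]_n) t : {set 'cV['F_2]_n} :=
  [set z | (wt (c0 + z) <= t)%N].

Lemma bias_fourier (R : numFieldType) n (P : 'cV['F_2]_n -> R) e :
  \sum_z P z = 1 -> bias P e = 2^-1 * fourier P e.
Proof.
move=> P1; rewrite /fourier (bigID (fun z => (e^T *m z) 0 0 == 1)) /=.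
rewrite (eq_bigr (fun z => - P z)) => [|z h]; last by rewrite /chi h mulrN1.
rewrite [X in _ * (_ + X)](eq_bigr P) => [|z h]; last by rewrite /chi (negbTE h) mulr1.
move: P1; rewrite sumrN /bias (bigID (fun z => (e^T *m z) 0 0 == 1)) /=.
set s1 := \sum_(i | _) P i; set s0 := \sum_(i | _) P i => P1.
have -> : s0 = 1 - s1 by rewrite -P1 addrAC subrr add0r.
by field.
Qed.

Lemma sum_fourier_sq (R : comNzRingType) n w (P : 'cV['F_2]_n -> R) :
  \sum_(e : 'cV['F_2]_n | wt e == w) fourier P e ^+ 2
  = \sum_z \sum_z' P z * P z' * \sum_(e : 'cV['F_2]_n | wt e == w) chi R e (z + z').
Proof.
under eq_bigr do rewrite expr2 mulr_suml; rewrite exchange_big /=.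
apply: eq_bigr => z _; under eq_bigr do rewrite mulr_sumr; rewrite exchange_big /=.
apply: eq_bigr => z' _; rewrite mulr_sumr; apply: eq_bigr => e _.
by rewrite chiDr mulrACA.
Qed.

Section SecondMoment.
Variables (R : realFieldType) (c C : R).
Hypotheses (hC : 1 <= C) (hK : kraw_bounded c C).
Variables (n w t : nat).
Hypotheses (hn : (1 <= n)%N) (hw : w%:R <= c * n%:R).
Let b : R := 'C(n, w)%:R.
Let r : R := 1 - 2 * w%:R / n%:R.
Hypothesis hr : 0 <= r.

(* Within distance t of 0 or of the all-ones word only the trivial bound C(n, w) is
   available; elsewhere the weight (or its complement) is in [t, n/2] and the hypothesis
   applies, using the reflection of sum_chi_wt_compl. *)
Lemma abs_sum_chi_wt_le (x : 'cV['F_2]_n) :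
  `|\sum_(e : 'cV['F_2]_n | wt e == w) chi R e x|
  <= b * ((wt x <= t)%N%:R + (wt (x + const_mx 1%R) <= t)%N%:R) + C * b * r ^+ t.
Proof.
have C0 : 0 <= C by apply: le_trans ler01 hC.
have Cbr0 : 0 <= C * b * r ^+ t by rewrite !mulr_ge0 ?exprn_ge0.
have r1 : r <= 1 by rewrite lerBlDr lerDl !mulr_ge0 ?invr_ge0.
have trivial : `|\sum_(e : 'cV['F_2]_n | wt e == w) chi R e x| <= b.
  rewrite /b -sum_wt_const; apply: le_trans (ler_norm_sum _ _ _) _.
  by apply: ler_sum => e _; rewrite normr_chi.
case: (leqP (wt x) t) => h1.
  apply: le_trans trivial _; rewrite -[X in X <= _]addr0 lerD //.
  by rewrite -[X in X <= _]mulr1 ler_wpM2l // lerDl.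
case: (leqP (wt (x + const_mx 1)) t) => h2.
  apply: le_trans trivial _; rewrite -[X in X <= _]addr0 lerD //.
  by rewrite -[X in X <= _]mulr1 ler_wpM2l // lerDr.
rewrite add0r mulr0 add0r; rewrite wt_add_const1 in h2.
have lerX i : (t <= i)%N -> C * b * r ^+ i <= C * b * r ^+ t.
  by move=> ti; rewrite ler_wpM2l ?mulr_ge0 // ler_wiXn2l.
case: (leqP (2 * wt x) n) => h3.
  by rewrite sum_chi_wt; apply: le_trans (hK hn hw h3) (lerX _ (ltnW h1)).
rewrite sum_chi_wt_compl normrM normrX normrN1 expr1n mul1r.
have h4 : (2 * (n - wt x) <= n)%N by have := wt_le x; lia.
exact: le_trans (hK hn hw h4) (lerX _ (ltnW h2)).
Qed.

Lemma sum_fourier_sq_le (P : 'cV['F_2]_n -> R) (m : R) : is_distr P ->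
  (forall c0, \sum_(z in hamming_ball c0 t) P z <= m) ->
  \sum_(e : 'cV['F_2]_n | wt e == w) fourier P e ^+ 2 <= b * (2 * m + C * r ^+ t).
Proof.
move=> [P0 P1] hm; rewrite sum_fourier_sq.
apply: le_trans (_ : \sum_z P z * (b * (2 * m + C * r ^+ t)) <= _); last first.
  by rewrite -mulr_suml P1 mul1r.
apply: ler_sum => z _; under eq_bigr do rewrite -mulrA; rewrite -mulr_sumr.
apply: ler_wpM2l; first exact: P0.
have ball_mass c0 : \sum_z' P z' * (wt (c0 + z') <= t)%N%:R <= m.
  apply: le_trans (hm c0); rewrite [X in _ <= X]big_mkcond /=.
  by apply: ler_sum => z' _; rewrite mulr_natr mulrb inE.
apply: le_trans (_ : \sum_z' P z' * (b * ((wt (z + z') <= t)%N%:R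
    + (wt (z + const_mx 1%R + z') <= t)%N%:R) + C * b * r ^+ t) <= _).
  apply: ler_sum => z' _; apply: ler_wpM2l; first exact: P0.
  by rewrite addrAC; apply: le_trans (ler_norm _) (abs_sum_chi_wt_le _).
under eq_bigr do rewrite mulrDr mulrCA mulrDr.
rewrite !big_split /= -!mulr_sumr -mulr_suml P1 mul1r big_split /=.
have -> : 2 * m = m + m by lra.
by rewrite [X in _ <= X]mulrDr mulrA [b * C]mulrC lerD2r ler_wpM2l //; apply: lerD.
Qed.

End SecondMoment.

Lemma bigmin_leq (I : eqType) (r : seq I) (P : pred I) (F : I -> nat) m i0 :
  i0 \in r -> P i0 -> (\big[minn/m]_(i <- r | P i) F i <= F i0)%N.
Proof.
elim: r => //= a r IH; rewrite inE big_cons => /orP[/eqP<- ->|ir Pi].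
  exact: geq_minl.
by case: (P a); [apply: leq_trans (geq_minr _ _) (IH ir Pi) | exact: IH].
Qed.

Lemma dual_dist_le_wt k n (G : 'M['F_2]_(k, n)) y :
  y \in dual_code G -> y != 0 -> (dual_dist G <= wt y)%N.
Proof. by move=> Dy y0; apply: bigmin_leq; rewrite ?mem_index_enum ?Dy. Qed.

Definition dual_radius k n (G : 'M['F_2]_(k, n)) : nat := ((dual_dist G).-1)./2.

(* Two words within (d-1)/2 of a common centre differ by a dual codeword of weight < d. *)
Lemma mulmx_inj_hamming_ball k n (G : 'M['F_2]_(k, n)) c0 :
  {in hamming_ball c0 (dual_radius G) &, injective (fun z => G *m z)}.
Proof.
set t := dual_radius G => z1 z2; rewrite !inE => h1 h2 Gz12.
set y := z1 + z2.
have Dy : y \in dual_code G by rewrite inE mulmxDr Gz12 addxx_F2.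
have wy : (wt y <= 2 * t)%N.
  have -> : y = (c0 + z1) + (c0 + z2) by rewrite addrACA addxx_F2 add0r.
  by apply: leq_trans (wt_add _ _) _; lia.
have ht : (2 * t <= (dual_dist G).-1)%N.
  by rewrite -[X in (_ <= X)%N](odd_double_half (dual_dist G).-1) mul2n leq_addl.
have [y0|yn0] := eqVneq y 0; first by rewrite -[z2]add0r -y0 -addrA addxx_F2 addr0.
have := dual_dist_le_wt Dy yn0; have : (0 < wt y)%N by rewrite lt0n wt_eq0.
rewrite -subn1 in ht; lia.
Qed.

Lemma card_fiber_mulmx_le k n (G : 'M['F_2]_(k, n)) (y : 'cV['F_2]_k) :
  (#|[set z : 'cV_n | G *m z == y]| <= #|dual_code G|)%N.
Proof.
case: (pickP (fun z => G *m z == y)) => [z0 /eqP Gz0 | none]; last first.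
  by rewrite (eq_card0 (A := [set z | G *m z == y])) // => z; rewrite inE none.
rewrite -(card_imset [set z | G *m z == y] (addIr z0)); apply: subset_leq_card.
apply/subsetP => x /imsetP[z]; rewrite !inE => /eqP Gz ->.
by rewrite mulmxDr Gz Gz0 addxx_F2.
Qed.

Lemma card_dual_code k n (G : 'M['F_2]_(k, n)) : (2 ^ n <= #|dual_code G| * 2 ^ k)%N.
Proof.
have cardV m : #|{: 'cV['F_2]_m}| = (2 ^ m)%N by rewrite card_mx card_Fp // muln1.
rewrite -!cardV -[X in (X <= _)%N]sum1_card (partition_big (fun z => G *m z) xpredT) //=.
rewrite mulnC -sum_nat_const; apply: leq_sum => y _.
by rewrite sum1dep_card (leq_trans _ (card_fiber_mulmx_le G y)) // cardsE.
Qed.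

Lemma card_hamming_ball n (c0 : 'cV['F_2]_n) t : #|hamming_ball c0 t| = Vball n t.
Proof.
have -> : hamming_ball c0 t = [set c0 + u | u in [set u | (wt u <= t)%N]].
  apply/setP => z; rewrite inE; apply/idP/imsetP => [hz|[u]].
    by exists (c0 + z); rewrite ?inE // addrA addxx_F2 add0r.
  by rewrite inE => hu ->; rewrite addrA addxx_F2 add0r.
rewrite card_imset; last exact: addrI.
rewrite -sum1_card (partition_big (fun u => inord (wt u) : 'I_t.+1) xpredT) //=.
apply: eq_bigr => j _; rewrite -card_wt -sum1_card; apply: eq_bigl => u.
rewrite !inE; case h: (wt u <= t)%N => /=.
  by apply/eqP/eqP => [<-|E]; [rewrite inordK | apply/val_inj; rewrite /= E inordK].
by apply/esym/negbTE/eqP => hj; move: h; rewrite hj -ltnS ltn_ord.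
Qed.

(* The mass Q puts on I exceeds the uniform mass only by the positive parts of
   Q - 2^-k, and these add up to the total variation distance. *)
Lemma sum_le_unif_add_dTV (R : realFieldType) k (Q : 'cV['F_2]_k -> R)
    (I : {set 'cV['F_2]_k}) :
  \sum_y Q y = 1 -> \sum_(y in I) Q y <= #|I|%:R / 2 ^+ k + dTV_unif Q.
Proof.
move=> Q1; set u : R := (2 ^+ k)^-1.
pose pos (a : R) := (`|a| + a) / 2.
have pos0 a : 0 <= pos a by rewrite divr_ge0 // -lerBlDr sub0r ler_normr lexx orbT.
have Qle y : Q y <= u + pos (Q y - u).
  by have := ler_norm (Q y - u); rewrite /pos; lra.
apply: le_trans (ler_sum _ (fun y _ => Qle y)) _.
rewrite big_split /= sumr_const [#|I|%:R * u]mulr_natl lerD2l.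
have -> : dTV_unif Q = \sum_y pos (Q y - u).
  rewrite /dTV_unif /pos -mulr_suml big_split /= mulrC sumrB Q1 sumr_const.
  rewrite card_mx card_Fp // muln1 -[u *+ _]mulr_natr natrX /u mulVf ?subrr ?addr0 //.
  by rewrite expf_neq0 // pnatr_eq0.
by rewrite [X in _ <= X](bigID (mem I)) /= lerDl sumr_ge0.
Qed.

Lemma sum_hamming_ball_le (R : realFieldType) k n (G : 'M['F_2]_(k, n))
    (P : 'cV['F_2]_n -> R) (eps : R) (c0 : 'cV['F_2]_n) :
  is_distr P -> dTV_unif (pushGZ G P) <= eps ->
  \sum_(z in hamming_ball c0 (dual_radius G)) P z
  <= (#|dual_code G| * Vball n (dual_radius G))%:R / 2 ^+ n + eps.
Proof.
move=> [P0 P1] hTV.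
have injB := @mulmx_inj_hamming_ball k n G c0.
have Ple z : P z <= pushGZ G P (G *m z).
  by rewrite /pushGZ (bigD1 z) //= lerDl sumr_ge0.
apply: le_trans (ler_sum _ (fun z _ => Ple z)) _.
rewrite -(big_imset _ injB) /=.
have Q1 : \sum_y pushGZ G P y = 1.
  by rewrite -P1 (partition_big (fun z => G *m z) xpredT).
apply: le_trans (sum_le_unif_add_dTV _ Q1) _; apply: lerD => //.
rewrite card_in_imset // card_hamming_ball natrM.
have := card_dual_code G; rewrite -(ler_nat R) !natrM !natrX => hD.
rewrite ler_pdivrMr ?exprn_gt0 // mulrAC ler_pdivlMr ?exprn_gt0 //.
by rewrite [X in _ <= X]mulrAC [X in X <= _]mulrC; apply: ler_wpM2r.
Qed.

Lemma sqrtr_le_sqr (R : rcfType) (x y : R) : 0 <= y -> x <= y ^+ 2 -> Num.sqrt x <= y.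
Proof. by move=> y0 xy; rewrite -(ger0_norm y0) -sqrtr_sqr ler_wsqrtr. Qed.

Lemma sqrtrD3_le (R : rcfType) (a b c : R) : 0 <= a -> 0 <= b -> 0 <= c ->
  Num.sqrt (a + b + c) <= Num.sqrt a + Num.sqrt b + Num.sqrt c.
Proof.
move=> a0 b0 c0; apply: sqrtr_le_sqr; first by rewrite !addr_ge0 ?sqrtr_ge0.
rewrite -{1}(sqr_sqrtr a0) -{1}(sqr_sqrtr b0) -{1}(sqr_sqrtr c0).
have := sqrtr_ge0 a; have := sqrtr_ge0 b; have := sqrtr_ge0 c.
set x := Num.sqrt a; set y := Num.sqrt b; set z := Num.sqrt c => z0 y0 x0.
have := mulr_ge0 x0 y0; have := mulr_ge0 y0 z0; have := mulr_ge0 x0 z0; nra.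
Qed.

(* Cauchy-Schwarz, through 2 l |a| <= a^2 + l^2 with l = sqrt X. *)
Lemma sum_abs_le_card_sqrt (R : rcfType) (I : finType) (A : {set I}) (a : I -> R) X :
  0 < X -> \sum_(i in A) a i ^+ 2 <= #|A|%:R * X ->
  \sum_(i in A) `|a i| <= #|A|%:R * Num.sqrt X.
Proof.
move=> X0 hsq; set l := Num.sqrt X.
have l0 : 0 < l by rewrite sqrtr_gt0.
have l2 : l ^+ 2 = X by rewrite sqr_sqrtr // ltW.
have amgm i : `|a i| * (2 * l) <= a i ^+ 2 + l ^+ 2.
  by have := sqr_ge0 (`|a i| - l); rewrite -[a i ^+ 2]real_normK ?num_real //; nra.
rewrite -(ler_pM2r (_ : 0 < 2 * l)) ?mulr_gt0 // mulr_suml.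
apply: le_trans (ler_sum _ (fun i _ => amgm i)) _.
rewrite big_split /= sumr_const l2 -mulr_natl.
by have := hsq; rewrite -l2; nra.
Qed.

Lemma abs_bias_le_half (R : realFieldType) n (P : 'cV['F_2]_n -> R) e :
  is_distr P -> `|bias P e| <= 2^-1.
Proof.
move=> [P0 P1]; rewrite bias_fourier // normrM ger0_norm ?invr_ge0 //.
rewrite -[X in _ <= X]mulr1 ler_wpM2l ?invr_ge0 // -P1.
apply: le_trans (ler_norm_sum _ _ _) (ler_sum _ _) => z _.
by rewrite normrM normr_chi mulr1 ger0_norm.
Qed.

Lemma mean_abs_bias_le_half (R : realFieldType) n w (P : 'cV['F_2]_n -> R) :
  is_distr P -> 'C(n, w)%:R^-1 * \sum_(e : 'cV['F_2]_n | wt e == w) `|bias P e| <= 2^-1.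
Proof.
move=> hP; have [->|b0] := eqVneq ('C(n, w)%:R : R) 0.
  by rewrite invr0 mul0r invr_ge0.
apply: le_trans (_ : _ <= 'C(n, w)%:R^-1 * ('C(n, w)%:R * 2^-1)) _.
  rewrite ler_wpM2l ?invr_ge0 // mulr_natl -sum_wt_const.
  by apply: ler_sum => e _; exact: abs_bias_le_half.
by rewrite mulrA mulVf // mul1r.
Qed.

Lemma mean_abs_bias_le_sqrt (R : rcfType) n w (P : 'cV['F_2]_n -> R) X :
  is_distr P -> (w <= n)%N -> 0 < X ->
  \sum_(e : 'cV['F_2]_n | wt e == w) fourier P e ^+ 2 <= 'C(n, w)%:R * X ->
  'C(n, w)%:R^-1 * \sum_(e : 'cV['F_2]_n | wt e == w) `|bias P e| <= Num.sqrt X / 2.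
Proof.
move=> [_ P1] wn X0 hsq.
have b0 : 0 < 'C(n, w)%:R :> R by rewrite ltr0n bin_gt0.
have inA (F : 'cV['F_2]_n -> R) :
    \sum_(e | wt e == w) F e = \sum_(e in [set e : 'cV['F_2]_n | wt e == w]) F e.
  by apply: eq_bigl => e; rewrite inE.
rewrite inA -card_wt in hsq; have habs := sum_abs_le_card_sqrt X0 hsq.
have abs_bias e : `|bias P e| = 2^-1 * `|fourier P e|.
  by rewrite bias_fourier // normrM ger0_norm ?invr_ge0.
rewrite (eq_bigr _ (fun e _ => abs_bias e)) -mulr_sumr inA; rewrite card_wt in habs.
apply: le_trans (_ : _ <= 'C(n, w)%:R^-1 * (2^-1 * ('C(n, w)%:R * Num.sqrt X))) _.
  by rewrite ler_wpM2l ?invr_ge0 ?ler0n // ler_wpM2l ?invr_ge0.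
by rewrite mulrCA mulKf ?gt_eqF // mulrC.
Qed.

Lemma half_sqrt_moment_le (R : realType) (a eps C r : R) (n t : nat) :
  0 <= a -> 0 <= eps -> 1 <= C -> 0 <= r -> (1 <= n)%N ->
  Num.sqrt (2 * (2 * a + eps) + C * r ^+ t) / 2
  <= Num.sqrt a + Num.sqrt (C * n%:R) / 2 * powR r (t%:R / 2) + Num.sqrt (eps / 2).
Proof.
move=> a0 eps0 C1 r0 n1.
have q0 : 0 <= C * r ^+ t by rewrite mulr_ge0 ?exprn_ge0 // (le_trans ler01 C1).
have -> : 2 * (2 * a + eps) + C * r ^+ t = 2 ^+ 2 * (a + C * r ^+ t / 4 + eps / 2).
  by field.
rewrite sqrtrM ?exprn_ge0 // sqrtr_sqr ger0_norm // mulrAC mulfV ?pnatr_eq0 // mul1r.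
apply: le_trans (sqrtrD3_le _ _ _) _; rewrite ?divr_ge0 //.
rewrite lerD2r lerD2l; apply: sqrtr_le_sqr.
  by rewrite mulr_ge0 ?divr_ge0 ?sqrtr_ge0 ?powR_ge0.
have pow2 : powR r (t%:R / 2) ^+ 2 = r ^+ t.
  by rewrite -powR_mulrn ?powR_ge0 // -powRrM divfK ?pnatr_eq0 // powR_mulrn.
rewrite !exprMn pow2 sqr_sqrtr ?mulr_ge0 ?(le_trans ler01 C1) //.
have h4 : (2^-1 : R) ^+ 2 = 4^-1 by rewrite exprVn expr2 -natrM.
have : 0 <= C * r ^+ t * (n%:R - 1) by rewrite mulr_ge0 // subr_ge0 ler1n.
by rewrite h4; nra.
Qed.

Theorem mainTheorem5 (R : realType) (c C : R)
  (hc0 : 0 < c) (hc1 : c < 1) (hC : 1 <= C)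
  (hK : forall (n' w' i : nat), (1 <= n')%N -> w'%:R <= c * n'%:R -> (2 * i <= n')%N ->
     `|kraw R n' w' i| <= C * ('C(n', w'))%:R * (1 - 2 * w'%:R / n'%:R) ^+ i)
  (n k : nat) (hk1 : (1 <= k)%N) (hkn : (k <= n - 1)%N)
  (G : 'M['F_2]_(k, n)) (hG : \rank G = k)
  (w : nat) (hw : w%:R <= c * n%:R)
  (eps : R) (heps : 0 < eps)
  (P : 'cV['F_2]_n -> R) (hP : is_distr P)
  (hTV : dTV_unif (pushGZ G P) <= eps) :
  let tp := ((dual_dist G).-1)./2 in
  ('C(n, w))%:R^-1 * \sum_(e : 'cV['F_2]_n | wt e == w) `|bias P e|
  <= Num.sqrt ((#|dual_code G| * Vball n tp)%:R / 2 ^+ n.+1)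
     + Num.sqrt (C * n%:R) / 2 * powR (1 - 2 * w%:R / n%:R) (tp%:R / 2)
     + Num.sqrt (eps / 2).
Proof.
cbv zeta; set tp := ((dual_dist G).-1)./2; have hn : (1 <= n)%N by lia.
have wn : (w < n)%N.
  by rewrite -(ltr_nat R); apply: le_lt_trans hw _; rewrite gtr_pMl // ltr0n.
set r := 1 - 2 * w%:R / n%:R; set a := _%:R / 2 ^+ n.+1.
have a0 : 0 <= a by rewrite divr_ge0 ?exprn_ge0.
have [rneg|r0] := ltP r 0.
  (* powR is constant 1 on negative bases, so the bound is at least 1/2. *)
  have -> : powR r (tp%:R / 2) = 1 by rewrite /powR lt_eqF // ln0 ?mulr0 ?expR0 // ltW.
  have s1 : 1 <= Num.sqrt (C * n%:R).
    have n1 : (1 : R) <= n%:R by rewrite ler1n.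
    have Cn : 1 <= C * n%:R by apply: le_trans (ler_pM ler01 ler01 hC n1); rewrite mulr1.
    by rewrite -[X in X <= _]sqrtr1 ler_sqrt ?(le_trans ler01 Cn).
  apply: le_trans (mean_abs_bias_le_half w hP) _.
  by have := sqrtr_ge0 a; have := sqrtr_ge0 (eps / 2); lra.
have hball c0 : \sum_(z in hamming_ball c0 tp) P z <= 2 * a + eps.
  have -> : 2 * a = (#|dual_code G| * Vball n tp)%:R / 2 ^+ n.
    by rewrite /a exprS invfM mulrCA [2 * _]mulrA mulfV ?mul1r ?pnatr_eq0.
  exact: sum_hamming_ball_le.
have hsq := sum_fourier_sq_le hC hK hn hw r0 hP hball.
apply: le_trans (mean_abs_bias_le_sqrt hP (ltnW wn) _ hsq) _.
  rewrite -[0]addr0 ltr_leD ?mulr_ge0 ?exprn_ge0 ?(le_trans ler01 hC) //.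
  by rewrite mulr_gt0 ?ltr0n // ltr_wpDl // mulr_ge0 ?ler0n.
exact: half_sqrt_moment_le (ltW heps) hC r0 hn.
Qed.
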